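(* For every positive integer $k$, the $2$-adic valuation of $s_k$ equals $\mathrm{wt}(k)-1$, where $\mathrm{wt}(k)$ is the number of $1$'s in the binary expansion of $k$. Consequently $\nu_2(s_{2k})=\mathrm{wt}(k)-1$ and $\nu_2(s_{k,k})\geq \mathrm{wt}(k)-2$.
   Context: $\nu_2:\mathbb{Q}^\times\to\mathbb{Z}$ is the $2$-adic valuation, $\nu_2(x/y)=\nu_2(x)-\nu_2(y)$. For a partition $I=(i_1,\dots,i_r)$ of $k$, $s_I$ denotes the coefficient of $p_{i_1}\cdots p_{i_r}$ in the $k$-th Hirzebruch $\mathcal{L}$-polynomial $\mathcal{L}_k(p_1,\dots,p_k)=\sum_{|I|=k}s_Ip_I$ (multiplicative sequence with characteristic power series $\sqrt t/\tanh\sqrt t$). In particular $s_k=\frac{2^{2k}(2^{2k-1}-1)|B_{2k}|}{(2k)!}$ with $B_j$ the Bernoulli numbers, and $s_{k,k}=\tfrac12(s_k^2-s_{2k})$. *)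

From HB Require Import structures.
From mathcomp Require Import all_boot all_order all_algebra.
Set Implicit Arguments. Unset Strict Implicit. Unset Printing Implicit Defensive.
Import Order.TTheory GRing.Theory Num.Theory.
Local Open Scope ring_scope.

(* bern_seq n = [:: B_0; B_1; ...; B_n], Bernoulli numbers with B_1 = -1/2,
   via the recurrence  sum_{j=0}^{m} C(m+1, j) B_j = 0  (m >= 1). *)
Fixpoint bern_seq (n : nat) : seq rat :=
  match n with
  | 0%N => [:: 1]
  | m.+1 =>
      let s := bern_seq m in
      rcons s (- ((m.+2)%:R)^-1 *
               \sum_(j < m.+1) ('C(m.+2, j))%:R * nth 0 s j)
  end.

Definition bernoulli (n : nat) : rat := nth 0 (bern_seq n) n.

Definition sk (k : nat) : rat :=
  2 ^+ (2 * k) * (2 ^+ (2 * k).-1 - 1) * `|bernoulli (2 * k)|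
    / ((2 * k)`!)%:R.

Definition skk (k : nat) : rat := (sk k ^+ 2 - sk (2 * k)) / 2.

(* 2-adic valuation of a rational (meaningful for q != 0) *)
Definition nu2 (q : rat) : int :=
  (logn 2 `|numq q|%N)%:Z - (logn 2 `|denq q|%N)%:Z.

Definition wt (k : nat) : nat := (\sum_(i < k.+1) odd (k %/ 2 ^ i))%N.

(* The 2-part of the von Staudt-Clausen theorem says that 2 B_n is odd (a
   2-adic unit) for even n >= 2; it follows by induction from the recurrence
   sum_j C(n+1, j) B_j = 0 reduced mod 2, once the odd Bernoulli numbers are
   known to vanish.  Hence nu2 B_{2k} = -1.  Legendre's formula gives
   nu2 (2k)! = 2k - wt k, and 2^{2k-1} - 1 is odd, so
   nu2 s_k = 2k - 1 - (2k - wt k) = wt k - 1.  Since wt (2k) = wt k, both s_k^2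
   and s_{2k} are divisible by 2^{wt k - 1}, which bounds nu2 s_{k,k}. *)

From HB Require Import structures.
From mathcomp Require Import all_boot all_order all_algebra.
From mathcomp Require Import ring lra zify.
Import Order.TTheory GRing.Theory Num.Theory.

Lemma wt_sum_bits N k : k < 2 ^ N -> wt k = \sum_(i < N) odd (k %/ 2 ^ i).
Proof.
have bits_above M : k < 2 ^ M ->
    forall L, \sum_(i < M + L) odd (k %/ 2 ^ i) = \sum_(i < M) odd (k %/ 2 ^ i).
  move=> hkM; elim=> [|L IH]; first by rewrite addn0.
  rewrite addnS big_ord_recr /= IH divn_small ?addn0 //.
  by apply: leq_trans hkM _; rewrite leq_exp2l ?leq_addr.
move=> hkN; have hk : k < 2 ^ k.+1 by rewrite expnS; have := ltn_expl k (ltnSn 1); lia.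
rewrite /wt -(bits_above _ hk N) addnC bits_above //.
Qed.

Lemma wt_half k : wt k = odd k + wt k./2.
Proof.
have hk2k := ltn_expl k (ltnSn 1).
have hk : k < 2 ^ k.+1 by rewrite expnS; lia.
have hk2 : k./2 < 2 ^ k by have := odd_double_half k; lia.
rewrite (wt_sum_bits _ _ hk) (wt_sum_bits _ _ hk2) big_ord_recl expn0 divn1.
by congr (_ + _); apply: eq_bigr => i _; rewrite expnS divnMA divn2.
Qed.

Lemma wt_double m : wt m.*2 = wt m.
Proof. by rewrite wt_half odd_double doubleK. Qed.

Lemma wt_gt0 k : 0 < k -> 0 < wt k.
Proof.
elim/ltn_ind: k => k IH k_gt0; rewrite wt_half.
case: (boolP (odd k)) => //= k_even; rewrite add0n IH //;
  by have := odd_double_half k; rewrite (negbTE k_even); lia.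
Qed.

Lemma logn2_fact_half n : logn 2 n`! = n./2 + logn 2 n./2`!.
Proof.
have logn2_fact_double m : logn 2 m.*2`! = m + logn 2 m`!.
  elim: m => // m IH; rewrite doubleS !factS.
  rewrite !lognM ?muln_gt0 ?fact_gt0 // IH.
  rewrite (logn_coprime (m := m.*2.+1)) ?coprime2n /= ?odd_double //.
  have -> : logn 2 m.*2.+2 = (logn 2 m.+1).+1 by rewrite -doubleS -mul2n lognM.
  lia.
rewrite -[in LHS](odd_double_half n).
case: (odd n); last by rewrite add0n logn2_fact_double.
rewrite add1n factS lognM ?fact_gt0 // logn2_fact_double.
by rewrite logn_coprime ?coprime2n /= ?odd_double.
Qed.

Lemma logn2_fact_add_wt n : logn 2 n`! + wt n = n.
Proof.
elim/ltn_ind: n => n IH; case: n IH => [|n] IH; first by rewrite /wt big_ord1.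
have IHh := IH n.+1./2; have := odd_double_half n.+1.
rewrite logn2_fact_half wt_half; lia.
Qed.

Local Open Scope ring_scope.

Lemma size_bern_seq n : size (bern_seq n) = n.+1.
Proof. by elim: n => //= n IH; rewrite size_rcons IH. Qed.

Lemma nth_bern_seq n j : (j <= n)%N -> nth 0 (bern_seq n) j = bernoulli j.
Proof.
elim: n => [|n IH]; first by rewrite leqn0 => /eqP ->.
rewrite leq_eqVlt => /orP[/eqP -> //|hj].
by rewrite /= nth_rcons size_bern_seq hj IH.
Qed.

Lemma bernoulli_rec m : \sum_(j < m.+2) 'C(m.+2, j)%:R * bernoulli j = 0.
Proof.
rewrite big_ord_recr /= binSn.
have -> : bernoulli m.+1 =
    - (m.+2)%:R^-1 * \sum_(j < m.+1) 'C(m.+2, j)%:R * bernoulli j.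
  rewrite /bernoulli /= nth_rcons size_bern_seq ltnn eqxx.
  by congr (_ * _); apply: eq_bigr => j _; rewrite nth_bern_seq // -ltnS.
by rewrite mulrA mulrN mulfV ?pnatr_eq0 // mulN1r subrr.
Qed.

Lemma bernoulli0 : bernoulli 0 = 1.
Proof. by []. Qed.

Lemma bernoulli1 : bernoulli 1 = - 2^-1.
Proof.
have := bernoulli_rec 0; rewrite !big_ord_recr big_ord0 /= add0r bernoulli0.
by rewrite bin0 bin1 mul1r; lra.
Qed.

Lemma dvdp_XnP (R : fieldType) (p : {poly R}) N :
  reflect (forall i, (i < N)%N -> p`_i = 0) ('X^N %| p).
Proof.
apply: (iffP (modp_eq0P _ _)); rewrite -Pdiv.IdomainMonic.take_poly_modp => hp.
  by move=> i hi; have := congr1 (coefp i) hp; rewrite /= coef_take_poly hi coef0.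
by apply/polyP => i; rewrite coef_take_poly coef0; case: ifP => // /hp.
Qed.

Definition egf (a : nat -> rat) N : {poly rat} := \poly_(i < N) (a i / i`!%:R).

Lemma fact_neq0 n : n`!%:R != 0 :> rat.
Proof. by rewrite pnatr_eq0 -lt0n fact_gt0. Qed.

Lemma coef_egfM a b N i : (i < N)%N ->
  (egf a N * egf b N)`_i =
    (\sum_(j < i.+1) 'C(i, j)%:R * a j * b (i - j)%N) / i`!%:R.
Proof.
move=> hiN; rewrite coefM mulr_suml; apply: eq_bigr => -[j /= /[!ltnS] hj] _.
rewrite !coef_poly (leq_ltn_trans hj hiN) (leq_ltn_trans (leq_subr j i) hiN).
rewrite -(bin_fact hj) !natrM.
by field; rewrite !fact_neq0 pnatr_eq0 -lt0n bin_gt0 hj.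
Qed.

Lemma coef_egf_bernoulli_expm1 c N i : (i < N)%N ->
  (egf (fun j => c ^+ j * bernoulli j) N * (egf (fun j => c ^+ j) N - 1))`_i =
    c ^+ i * (i == 1%N)%:R.
Proof.
move=> hiN; rewrite mulrBr mulr1 coefB coef_egfM // coef_poly hiN big_ord_recr /=.
rewrite subnn expr0 mulr1 binn mul1r mulrDl addrK.
have -> : \sum_(j < i) 'C(i, j)%:R * (c ^+ j * bernoulli j) * c ^+ (i - j) =
    c ^+ i * \sum_(j < i) 'C(i, j)%:R * bernoulli j.
  rewrite mulr_sumr; apply: eq_bigr => -[j /= hj] _.
  have -> : c ^+ i = c ^+ j * c ^+ (i - j) by rewrite -exprD subnKC // ltnW.
  ring.
case: i hiN => [|[|i]] _.
- by rewrite big_ord0 !mulr0 mul0r.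
- by rewrite big_ord1 bin0 bernoulli0 !mulr1.
- by rewrite (bernoulli_rec i) !mulr0 mul0r.
Qed.

Lemma coef_egf_exp_expN c N i : (i < N)%N ->
  (egf (fun j => c ^+ j) N * egf (fun j => (- c) ^+ j) N)`_i = (i == 0%N)%:R.
Proof.
move=> hiN; rewrite coef_egfM //.
have -> : \sum_(j < i.+1) 'C(i, j)%:R * c ^+ j * (- c) ^+ (i - j) = (- c + c) ^+ i.
  by rewrite exprDn; apply: eq_bigr => j _; rewrite -mulr_natl; ring.
rewrite addNr expr0n; case: i hiN => [|i] _; last by rewrite mul0r.
by rewrite divr1.
Qed.

(* With b, e the truncations of x / (e^x - 1) and e^x, and b', e' those at -x,
   e e' = 1 forces (b' - x - b) (e - 1) = 0 mod x^N; as e - 1 = x u with u(0) = 1,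
   b' = b + x mod x^(N-1), i.e. b(x) + x/2 is even. *)
Lemma bernoulli_odd n : odd n -> (1 < n)%N -> bernoulli n = 0.
Proof.
move=> n_odd n_gt1; set N := n.+2.
set b := egf (fun j => 1 ^+ j * bernoulli j) N.
set b' := egf (fun j => (-1) ^+ j * bernoulli j) N.
set e := egf (fun j => 1 ^+ j) N; set e' := egf (fun j => (-1) ^+ j) N.
have be : 'X^N %| b * (e - 1) - 'X.
  apply/dvdp_XnP => i hi.
  by rewrite coefB coef_egf_bernoulli_expm1 // coefX expr1n mul1r subrr.
have be' : 'X^N %| b' * (e' - 1) + 'X.
  apply/dvdp_XnP => i hi; rewrite coefD coef_egf_bernoulli_expm1 // coefX.
  by case: (i =P 1%N) => [->|_]; rewrite ?expr1 ?mulr1 ?addNr ?mulr0 ?addr0.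
have ee' : 'X^N %| e * e' - 1.
  by apply/dvdp_XnP => i hi; rewrite coefB coef_egf_exp_expN // coef1 subrr.
have : 'X^N %| (b' - 'X - b) * (e - 1).
  have -> : (b' - 'X - b) * (e - 1) =
      b' * (e * e' - 1) - e * (b' * (e' - 1) + 'X) - (b * (e - 1) - 'X) by ring.
  by rewrite dvdp_subl // dvdp_sub ?dvdp_mull.
have -> : e - 1 = 'X * drop_poly 1 e.
  apply/polyP => -[|i]; rewrite coefB coef1 coefXM ?coef_drop_poly /=.
    by rewrite coef_poly expr1n divr1 subrr.
  by rewrite subr0 addn1.
rewrite /N exprS mulrCA dvdp_mul2l ?polyX_eq0 // Gauss_dvdpl; last first.
  rewrite coprimep_expl // coprimep_sym coprimepX /root horner_coef0.
  by rewrite coef_drop_poly coef_poly expr1n divr1 oner_eq0.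
move=> /dvdp_XnP/(_ n (ltnSn n)).
rewrite !coefB !coef_poly coefX /N ltnS leqnSn (gtn_eqF n_gt1) subr0.
rewrite -signr_odd n_odd expr1 expr1n !mul1r => h.
have /eqP : bernoulli n / n`!%:R = 0 by lra.
by rewrite mulf_eq0 invr_eq0 (negbTE (fact_neq0 n)) orbF => /eqP.
Qed.

Lemma sum_bin_even N : \sum_(j < N.+2) 'C(N.+1, j)%:R * (~~ odd j)%:R = 2 ^+ N :> rat.
Proof.
apply: (@mulIf _ 2) => //; rewrite -exprSr mulr_suml.
have -> : (2 : rat) ^+ N.+1 = (1 + 1) ^+ N.+1 + (1 + -1) ^+ N.+1.
  by rewrite addrN expr0n addr0.
rewrite !exprDn -big_split; apply: eq_bigr => j _ /=.
by rewrite -signr_odd !expr1n !mul1r; case: (odd j); rewrite /= ?expr1 ?mulNrn; lra.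
Qed.

Definition two_integral (q : rat) : Prop :=
  exists (a : int) (b : nat), odd b /\ q = a%:~R / b%:R.

Lemma odd_natr_neq0 {b} : odd b -> b%:R != 0 :> rat.
Proof. by rewrite pnatr_eq0; case: b. Qed.

Lemma two_integral_int (a : int) : two_integral a%:~R.
Proof. by exists a, 1%N; rewrite divr1. Qed.

Lemma two_integral0 : two_integral 0.
Proof. exact: two_integral_int 0. Qed.

Lemma two_integral_nat n : two_integral n%:R.
Proof. by have := two_integral_int n; rewrite pmulrn. Qed.

Lemma two_integralD p q : two_integral p -> two_integral q -> two_integral (p + q).
Proof.
move=> [a [b [b_odd ->]]] [c [d [d_odd ->]]].
exists (a * d%:Z + c * b%:Z), (b * d)%N; split; first by rewrite oddM b_odd.
have := odd_natr_neq0 b_odd; have := odd_natr_neq0 d_odd => ? ?.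
by rewrite natrM intrD !intrM -!pmulrn; field; apply/andP.
Qed.

Lemma two_integralM p q : two_integral p -> two_integral q -> two_integral (p * q).
Proof.
move=> [a [b [b_odd ->]]] [c [d [d_odd ->]]].
exists (a * c), (b * d)%N; split; first by rewrite oddM b_odd.
have := odd_natr_neq0 b_odd; have := odd_natr_neq0 d_odd => ? ?.
by rewrite natrM intrM; field; apply/andP.
Qed.

Lemma two_integralN q : two_integral q -> two_integral (- q).
Proof. by rewrite -mulN1r; apply: two_integralM (two_integral_int (-1)). Qed.

Lemma two_integralB p q : two_integral p -> two_integral q -> two_integral (p - q).
Proof. by move=> hp /two_integralN; apply: two_integralD. Qed.

Lemma two_integral_div_odd q m : odd m -> two_integral q -> two_integral (q / m%:R).
Proof.
move=> m_odd [a [b [b_odd ->]]]; exists a, (b * m)%N; split; first by rewrite oddM b_odd.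
have := odd_natr_neq0 b_odd; have := odd_natr_neq0 m_odd => ? ?.
by rewrite natrM; field; apply/andP.
Qed.

Lemma two_integral_sum n (F : 'I_n -> rat) :
  (forall i, two_integral (F i)) -> two_integral (\sum_(i < n) F i).
Proof.
by move=> hF; apply: (big_ind two_integral); [exact: two_integral0 | exact: two_integralD |].
Qed.

(* The residue of 2 B_j mod 2: it is 2, -1, 1, 0 for j = 0, 1, even >= 2, odd >= 3. *)
Definition bernoulli_res (j : nat) : rat :=
  (~~ odd j)%:R + (j == 0%N)%:R - (j == 1%N)%:R.

Lemma sum_bin_bernoulli_res m : ~~ odd m ->
  \sum_(j < m.+2) 'C(m.+3, j)%:R * bernoulli_res j = 2 ^+ m.+2 - 2 * m.+2%:R - 1.
Proof.
move=> m_even.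
have indicator i : (i < m.+2)%N ->
    \sum_(j < m.+2) 'C(m.+3, j)%:R * (j == i :> nat)%:R = 'C(m.+3, i)%:R :> rat.
  move=> hi; rewrite (bigD1 (Ordinal hi)) //= eqxx mulr1 big1 ?addr0 //.
  move=> -[j hj] /= hji; rewrite (_ : (j == i) = false) ?mulr0 //.
  by apply: contraNF hji => /eqP ji; apply/eqP/val_inj.
have even_sum := sum_bin_even m.+2.
rewrite 2!big_ord_recr /= binSn binn !negbK (negbTE m_even) in even_sum.
under eq_bigr => j _ do rewrite /bernoulli_res mulrBr mulrDr.
rewrite sumrB big_split /= !indicator // bin0 bin1.
move: even_sum; rewrite /= mulr1n mulr0n mulr1 mulr0 addr0 -[m.+3%:R]natr1.
lra.
Qed.

Lemma two_integral_bernoulli n :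
  two_integral ((2 * bernoulli n - bernoulli_res n) / 2).
Proof.
elim/ltn_ind: n => -[|[|m]] IH.
- rewrite (_ : _ / 2 = 0); first exact: two_integral0.
  by rewrite bernoulli0 /bernoulli_res /= mulr1n mulr0n; lra.
- rewrite (_ : _ / 2 = 0); first exact: two_integral0.
  by rewrite bernoulli1 /bernoulli_res /= mulr1n mulr0n; lra.
have [m_odd|m_even] := boolP (odd m).
  rewrite (_ : _ / 2 = 0); first exact: two_integral0.
  by rewrite bernoulli_odd /= ?negbK // /bernoulli_res /= negbK m_odd /=; lra.
set T := \sum_(j < m.+2) 'C(m.+3, j)%:R * ((2 * bernoulli j - bernoulli_res j) / 2).
have T_int : two_integral T.
  by apply: two_integral_sum => j; apply: two_integralM (two_integral_nat _) (IH j _).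
have rec := bernoulli_rec m.+1; rewrite big_ord_recr /= binSn in rec.
have : \sum_(j < m.+2) 'C(m.+3, j)%:R * bernoulli j =
    (\sum_(j < m.+2) 'C(m.+3, j)%:R * bernoulli_res j) / 2 + T.
  by rewrite /T mulr_suml -big_split; apply: eq_bigr => j _ /=; field.
rewrite sum_bin_bernoulli_res // => sum_eq.
rewrite /bernoulli_res /= negbK (negbTE m_even) /= mulr1n mulr0n subr0 addr0.
have [k m_eq] : exists k, m = k.*2.
  by exists m./2; rewrite -[m in LHS]odd_double_half (negbTE m_even).
(* The recurrence gives (2k+3) (2 B_(2k+2) - 1) / 2 = k + 1 - 2^(2k+1) - T, with 2k+3 odd. *)
subst m; rewrite (_ : _ / 2 = ((k.+1)%:R - 2 ^+ (k.*2).+1 - T) / (k.*2).+3%:R).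
  apply: two_integral_div_odd; first by rewrite /= !negbK odd_double.
  by rewrite -natrX; apply/two_integralB/T_int/two_integralB; apply: two_integral_nat.
have d_neq0 : (k.*2).+3%:R != 0 :> rat by rewrite pnatr_eq0.
apply: (mulIf d_neq0); rewrite divfK //.
have natr_k2 c : (k.*2 + c)%:R = 2 * k%:R + c%:R :> rat.
  by rewrite natrD -muln2 natrM mulrC.
move: rec; rewrite sum_eq -(addn3 k.*2) -(addn2 k.*2) -(addn1 k) !natr_k2 natrD.
rewrite exprD expr2 exprS => rec; nra.
Qed.

Lemma nu2_frac (x y : int) : x != 0 -> y != 0 ->
  nu2 (x%:~R / y%:~R) = (logn 2 `|x|)%:Z - (logn 2 `|y|)%:Z.
Proof.
case: divqP => [_ _|c q c_neq0]; first by rewrite eqxx.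
rewrite mulf_eq0 negb_or => /andP[_ nq_neq0] _.
rewrite /nu2 !abszM !lognM ?absz_gt0 ?denq_neq0 //; lia.
Qed.

Lemma nu2M p q : p != 0 -> q != 0 -> nu2 (p * q) = nu2 p + nu2 q.
Proof.
rewrite -!numq_eq0 => p_neq0 q_neq0.
rewrite -[p]divq_num_den -[q]divq_num_den mulf_div -!intrM.
rewrite !nu2_frac ?mulf_neq0 ?denq_neq0 // !abszM !lognM ?absz_gt0 ?denq_neq0 //.
lia.
Qed.

Lemma nu2V q : nu2 q^-1 = - nu2 q.
Proof.
have [-> | q_neq0] := eqVneq q 0; first by rewrite invr0.
rewrite -numq_eq0 in q_neq0.
rewrite -[q]divq_num_den invf_div !nu2_frac ?denq_neq0 //; lia.
Qed.

Lemma nu2_div p q : p != 0 -> q != 0 -> nu2 (p / q) = nu2 p - nu2 q.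
Proof. by move=> p_neq0 q_neq0; rewrite nu2M ?invr_eq0 // nu2V. Qed.

Lemma nu2N q : nu2 (- q) = nu2 q.
Proof. by rewrite /nu2 numqN denqN abszN. Qed.

Lemma nu2_norm q : nu2 `|q| = nu2 q.
Proof.
by have [q_ge0|q_lt0] := lerP 0 q; [rewrite ger0_norm | rewrite ltr0_norm // nu2N].
Qed.

Lemma nu2_natr n : (0 < n)%N -> nu2 n%:R = logn 2 n.
Proof. by move=> n_gt0; rewrite pmulrn /nu2 numq_int denq_int /= subr0. Qed.

Lemma nu2_exp2 e : nu2 (2 ^+ e) = e.
Proof. by rewrite -natrX nu2_natr ?expn_gt0 // pfactorK. Qed.

Lemma nu2_odd n : odd n -> nu2 n%:R = 0.
Proof.
by move=> n_odd; rewrite nu2_natr ?logn_coprime ?coprime2n //; case: n n_odd.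
Qed.

Lemma two_integralP q : two_integral q <-> 0 <= nu2 q.
Proof.
split.
  move=> [a [b [b_odd ->]]]; have [-> | a_neq0] := eqVneq a 0; first by rewrite mul0r.
  rewrite pmulrn nu2_frac //; last by case: b b_odd.
  by rewrite (logn_coprime (m := `|Posz b|)) ?coprime2n // subr0.
move=> nu2_ge0; exists (numq q), `|denq q|%N; rewrite pmulrn absz_denq divq_num_den.
split=> //; apply: contraT => den_even.
have num_odd : coprime 2 `|numq q| .
  rewrite coprime_sym (coprime_dvdr _ (coprime_num_den q)) //.
  by rewrite dvdn2.
have : (0 < logn 2 `|denq q|)%N.
  by rewrite logn_gt0 mem_primes absz_gt0 denq_neq0 dvdn2 den_even.
by move: nu2_ge0; rewrite /nu2 (logn_coprime num_odd); lia.
Qed.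

Lemma two_integral_div_exp2 q e : e%:Z <= nu2 q -> two_integral (q / 2 ^+ e).
Proof.
have [-> _ | q_neq0 e_le] := eqVneq q 0.
  by rewrite mul0r; apply: two_integral0.
by apply/two_integralP; rewrite nu2_div ?expf_neq0 // nu2_exp2 subr_ge0.
Qed.

Lemma nu2_ge_exp2 q e : q != 0 -> two_integral (q / 2 ^+ e) -> e%:Z <= nu2 q.
Proof.
by move=> q_neq0 /two_integralP; rewrite nu2_div ?expf_neq0 // nu2_exp2 subr_ge0.
Qed.

Lemma nu2_one_add_double t : two_integral t -> nu2 (1 + 2 * t) = 0.
Proof.
move=> [a [b [b_odd ->]]].
have num_odd : odd (absz (b%:Z + 2 * a)) by lia.
have -> : 1 + 2 * (a%:~R / b%:R) = (b%:Z + 2 * a)%:~R / (b%:Z)%:~R :> rat.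
  by rewrite intrD intrM -pmulrn (_ : 2%:~R = 2) //; field; apply: odd_natr_neq0.
rewrite nu2_frac //=; last by apply: contraTneq b_odd => -[->].
  by rewrite !logn_coprime ?coprime2n.
by apply: contraTneq num_odd => ->.
Qed.

Lemma one_add_double_neq0 t : two_integral t -> 1 + 2 * t != 0.
Proof.
move=> /two_integralP; apply: contraTneq => h.
have -> : t = - 2^-1 by lra.
by rewrite nu2N nu2V (nu2_exp2 1).
Qed.

Lemma bernoulli_double k : (0 < k)%N ->
  exists2 t, two_integral t & bernoulli k.*2 = (1 + 2 * t) / 2.
Proof.
move=> k_gt0; exists ((2 * bernoulli k.*2 - 1) / 2); last by field.
have res1 : bernoulli_res k.*2 = 1.
  case: k k_gt0 => // k _; rewrite /bernoulli_res odd_double doubleS /=.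
  by rewrite mulr1n mulr0n subr0 addr0.
by have := two_integral_bernoulli k.*2; rewrite res1.
Qed.

Lemma nu2_sk k : (0 < k)%N -> nu2 (sk k) = (wt k)%:Z - 1.
Proof.
move=> k_gt0; have [t t_int B_eq] := bernoulli_double _ k_gt0.
have B_neq0 : bernoulli k.*2 != 0.
  by rewrite B_eq mulf_neq0 ?invr_eq0 ?one_add_double_neq0.
have nu2B : nu2 (bernoulli k.*2) = -1.
  by rewrite B_eq nu2_div ?one_add_double_neq0 // nu2_one_add_double // (nu2_exp2 1).
have legendre := logn2_fact_add_wt k.*2; rewrite wt_double in legendre.
have odd_factor : odd (2 ^ (k.*2).-1 - 1).
  by rewrite oddB ?expn_gt0 // oddX orbF (_ : _ == 0%N = false) //; lia.
rewrite /sk mul2n (_ : 2 ^+ _ - 1 = (2 ^ (k.*2).-1 - 1)%N%:R); last first.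
  by rewrite natrB ?expn_gt0 // natrX.
have factor_neq0 := odd_natr_neq0 odd_factor.
rewrite nu2_div ?mulf_neq0 ?expf_neq0 ?normr_eq0 ?fact_neq0 //.
rewrite !nu2M ?mulf_neq0 ?expf_neq0 ?normr_eq0 //.
rewrite nu2_exp2 nu2_odd // nu2_norm nu2B nu2_natr ?fact_gt0 //.
lia.
Qed.

Lemma nu2_skk_ge k : (0 < k)%N -> skk k != 0 -> (wt k)%:Z - 2 <= nu2 (skk k).
Proof.
move=> k_gt0 skk_neq0; have wt_k_gt0 := wt_gt0 _ k_gt0; set e := (wt k).-1.
have sk_div_int j : wt j = wt k -> (0 < j)%N -> two_integral (sk j / 2 ^+ e).
  by move=> wt_j j_gt0; apply: two_integral_div_exp2; rewrite nu2_sk // wt_j; lia.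
have : two_integral (2 * skk k / 2 ^+ e).
  have -> : 2 * skk k / 2 ^+ e = (sk k / 2 ^+ e) ^+ 2 * 2 ^+ e - sk (2 * k) / 2 ^+ e.
    by rewrite /skk; field; rewrite expf_neq0.
  apply: two_integralB; last by apply: sk_div_int; rewrite mul2n ?wt_double ?double_gt0.
  apply: two_integralM; last by rewrite -natrX; apply: two_integral_nat.
  by rewrite expr2; apply: two_integralM; apply: sk_div_int.
move/nu2_ge_exp2; rewrite nu2M // (nu2_exp2 1) mulf_neq0 //; lia.
Qed.

Theorem mainTheorem3 (k : nat) (hk : (0 < k)%N) :
  nu2 (sk k) = (wt k)%:Z - 1 /\
  nu2 (sk (2 * k)) = (wt k)%:Z - 1 /\
  (skk k = 0 \/ (wt k)%:Z - 2 <= nu2 (skk k)).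
Proof.
split; first exact: nu2_sk.
split; first by rewrite nu2_sk ?mul2n ?wt_double ?double_gt0.
by have [|skk_neq0] := eqVneq (skk k) 0; [left | right; apply: nu2_skk_ge].
Qed.
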